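(* For every prime power $q$ of characteristic $p\ge3$, the number $J_{\mathrm{L}}(q)$ of distinct $j$-invariants of the Legendre curves $E_{\mathrm{L},u}$, $u\in\mathbb{F}_q\setminus\{0,1\}$, equals $\left\lfloor\frac{q+5}{6}\right\rfloor$.
   Context: For $u\in\mathbb{F}_q\setminus\{0,1\}$ ($q$ odd), $E_{\mathrm{L},u}$ is the elliptic curve $Y^2=X(X-1)(X-u)$ over $\mathbb{F}_q$, with $j$-invariant $j(E_{\mathrm{L},u})=\frac{2^8(u^2-u+1)^3}{(u^2-u)^2}$. $J_{\mathrm{L}}(q)=\#\{j(E_{\mathrm{L},u}) : u\in\mathbb{F}_q\setminus\{0,1\}\}$, i.e. the number of $\overline{\mathbb{F}}_q$-isomorphism classes represented in this family. *)

From HB Require Import structures.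
From mathcomp Require Import all_boot all_order all_algebra all_field.
Set Implicit Arguments. Unset Strict Implicit. Unset Printing Implicit Defensive.
Import GRing.Theory.
Local Open Scope ring_scope.

(* j-invariant of the Legendre curve Y^2 = X(X-1)(X-u):
   j = 2^8 (u^2-u+1)^3 / (u^2-u)^2. *)
Definition jLegendre (F : fieldType) (u : F) : F :=
  2%:R ^+ 8 * (u ^+ 2 - u + 1) ^+ 3 / (u ^+ 2 - u) ^+ 2.

Definition JL (F : finFieldType) : nat :=
  #|[set jLegendre u | u in [set u : F | (u != 0) && (u != 1)]]|.

From HB Require Import structures.
From mathcomp Require Import all_boot all_order all_algebra all_field.
From mathcomp Require Import ring zify.
Import GRing.Theory.
Local Open Scope ring_scope.

(* Write D = F \ {0, 1}.  The maps s u = 1 - u and t u = u^-1 generate the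
   anharmonic group (a copy of S_3) acting on D, and the orbit of u is the
   six-term list  lorbit u = [u; su; tu; tsu; stu; stsu].  Two parameters have
   the same j-invariant iff they lie in the same orbit, because j(v) - j(u)
   factors into the six linear forms v - g(u).  Orbit-stabiliser: every element
   of lorbit u occurs equally often in it (multiplicities are invariant under s
   and t, which permute the list), so  #|orbit| * stab(u) = 6, where
   stab(u) = count_mem u (lorbit u).  Summing stab over D counts fixed points:
   q - 2 for the identity, one each for the involutions u |-> 1 - u, u^-1,
   u/(u-1) (namely 1/2, -1, 2), and r each for the 3-cycles, where r <= 2 is
   the number of roots of u^2 - u + 1.  Hence 6 J_L(q) = q + 1 + 2r, which
   forces J_L(q) = floor((q + 5) / 6). *)

Lemma card_count_const {T : finType} {s : seq T} {c : nat} :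
  {in s, forall x, count_mem x s = c} -> (#|s| * c = size s)%N.
Proof.
move=> cst; rewrite -(perm_size (perm_count_undup s)) size_flatten sumnE !big_map.
rewrite (eq_big_seq (fun=> c)) => [|x]; last by rewrite mem_undup size_nseq => /cst.
rewrite big_const_seq count_predT iter_addn_0 mulnC.
rewrite -(card_uniqP (undup_uniq s)); congr (_ * _)%N.
by apply: eq_card => x; rewrite mem_undup.
Qed.

Lemma card_imset_weights (T S : finType) (f : T -> S) (A : {set T})
    (w : T -> nat) (k : nat) :
  (forall u, u \in A -> #|[set v in A | f v == f u]| * w u = k)%N ->
  (#|f @: A| * k = \sum_(u in A) w u)%N.
Proof.
move=> fibre; rewrite (partition_big_imset f) -sum_nat_const.
apply: eq_bigr => _ /imsetP[u uA ->].
have fibre_pos : (0 < #|[set v in A | f v == f u]|)%N.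
  by apply/card_gt0P; exists u; rewrite inE uA eqxx.
rewrite (eq_bigr (fun=> w u)) => [|v /andP[vA /eqP fvu]].
  by rewrite sum_nat_const -(fibre u uA) cardsE.
have same_fibre : [set x in A | f x == f v] = [set x in A | f x == f u].
  by apply/setP => x; rewrite !inE fvu.
by apply/eqP; rewrite -(eqn_pmul2l fibre_pos) (fibre u uA) -same_fibre fibre.
Qed.

Lemma count_mem_stable {T : eqType} {h : T -> T} {s : seq T} :
  injective h -> perm_eq (map h s) s -> forall x, count_mem (h x) s = count_mem x s.
Proof.
move=> inj_h hs x; rewrite -(permP hs) count_map.
by apply: eq_count => y; rewrite /= (inj_eq inj_h).
Qed.

Lemma sum_indicator (T : finType) (A : {pred T}) (P : pred T) :
  (\sum_(i in A) (P i : nat) = #|[pred i in A | P i]|)%N.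
Proof.
rewrite -sum1_card [RHS](eq_bigl (fun i => (i \in A) && P i)) // [RHS]big_mkcondr.
by apply: eq_bigr => i _; case: (P i).
Qed.

Lemma card_quadratic_roots (F : finFieldType) (b c : F) :
  (#|[set x : F | (x ^+ 2 + b * x + c == 0)%R]| <= 2)%N.
Proof.
case: (set_0Vmem [set x : F | (x ^+ 2 + b * x + c == 0)%R]) => [-> | [a]].
  by rewrite cards0.
rewrite inE => /eqP root_a.
apply: (@leq_trans #|[set a; - b - a]|); last by rewrite cards2; case: (_ != _).
apply/subset_leq_card/subsetP => x; rewrite !inE => /eqP root_x.
have factor : (x - a) * (x - (- b - a)) = (x ^+ 2 + b * x + c) - (a ^+ 2 + b * a + c).
  by ring.
by move: factor; rewrite root_x root_a subrr => /eqP; rewrite mulf_eq0 !subr_eq0.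
Qed.

Section AnharmonicOrbit.
Context {F : fieldType}.
Implicit Types u v x a b : F.

Definition nondeg u := (u != 0) && (u != 1).

(* The orbit of u under the anharmonic group, generated by s u = 1 - u and
   t u = u^-1, listed as u, su, tu, tsu, stu, stsu. *)
Definition lorbit u : seq F :=
  [:: u; 1 - u; u^-1; (1 - u)^-1; 1 - u^-1; 1 - (1 - u)^-1].

Lemma eq_frac {x y a b} : b != 0 -> x - y = a / b -> (x == y) = (a == 0).
Proof. by move=> b0 E; rewrite -subr_eq0 E mulf_eq0 invr_eq0 (negbTE b0) orbF. Qed.

Lemma subr1_neq0 {u} : u != 1 -> 1 - u != 0.
Proof. by rewrite subr_eq0 eq_sym. Qed.

Lemma nondeg_sub {u} : nondeg u -> nondeg (1 - u).
Proof.
case/andP=> u0 u1; rewrite /nondeg subr1_neq0 //=.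
by rewrite -subr_eq0 addrAC subrr add0r oppr_eq0.
Qed.

Lemma nondeg_inv {u} : nondeg u -> nondeg u^-1.
Proof. by rewrite /nondeg invr_eq0 invr_eq1. Qed.

Lemma lorbit_nondeg {u} : nondeg u -> {in lorbit u, forall v, nondeg v}.
Proof.
move=> hu; apply/allP; have hs := nondeg_sub hu; have hi := nondeg_inv hu.
by rewrite /= hu hs hi nondeg_inv // !nondeg_sub // nondeg_inv.
Qed.

(* The braid relation t s t = s t s of the anharmonic group. *)
Lemma inv_braid {u} : nondeg u -> (1 - u^-1)^-1 = 1 - (1 - u)^-1.
Proof.
case/andP=> u0 u1; have u1' := subr1_neq0 u1.
by field; rewrite u0 u1' subr_eq0 u1.
Qed.

Lemma lorbit_sub_perm u : perm_eq (map (fun x => 1 - x) (lorbit u)) (lorbit u).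
Proof. by rewrite /= !subKr; apply/permP => P /=; ring. Qed.

Lemma lorbit_inv_perm {u} : nondeg u -> perm_eq (map GRing.inv (lorbit u)) (lorbit u).
Proof.
move=> hu; rewrite /= !invrK (inv_braid hu) inv_braid ?nondeg_sub // subKr.
by apply/permP => P /=; ring.
Qed.

Lemma lorbit_count_const {u} : nondeg u ->
  {in lorbit u, forall v, count_mem v (lorbit u) = count_mem u (lorbit u)}.
Proof.
move=> hu v; have inj_sub : injective (fun x : F => 1 - x) := can_inj (subKr 1).
have count_sub := count_mem_stable inj_sub (lorbit_sub_perm u).
have count_inv := count_mem_stable (@invr_inj F) (lorbit_inv_perm hu).
by rewrite !inE => /or4P[| | |/orP[|/orP[]]] /eqP->; rewrite ?(count_sub, count_inv).
Qed.

Lemma nondeg_denom {u} : nondeg u -> u ^+ 2 - u != 0.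
Proof.
by case/andP=> u0 u1; rewrite (_ : _ - _ = u * (u - 1)) ?mulf_neq0 ?subr_eq0 //; ring.
Qed.

(* j(v) - j(u) vanishes exactly along the six lines v = g(u). *)
Lemma jLegendre_sub {u v} : nondeg u -> nondeg v ->
  jLegendre v - jLegendre u =
    2%:R ^+ 8 * ((v - u) * (v + u - 1) * (u * v - 1) * ((1 - u) * v - 1)
                 * (u * v - u + 1) * ((1 - u) * v + u))
    / ((u ^+ 2 - u) ^+ 2 * (v ^+ 2 - v) ^+ 2).
Proof. by move=> hu hv; rewrite /jLegendre; field; rewrite !nondeg_denom. Qed.

Lemma jLegendre_eq u v : 2%:R != 0 :> F -> nondeg u -> nondeg v ->
  (jLegendre v == jLegendre u) = (v \in lorbit u).
Proof.
move=> two0 hu hv; have /andP[u0 u1] := hu; have u1' := subr1_neq0 u1.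
rewrite (eq_frac _ (jLegendre_sub hu hv)) ?mulf_neq0 ?expf_neq0 ?nondeg_denom //.
rewrite mulf_eq0 expf_eq0 (negbTE two0) andbF /= !mulf_eq0 -!orbA !inE.
have e2 : (v == 1 - u) = (v + u - 1 == 0) by rewrite -subr_eq0 opprB addrA.
have e3 : (v == u^-1) = (u * v - 1 == 0) by apply: (@eq_frac _ _ _ u) => //; field.
have e4 : (v == (1 - u)^-1) = ((1 - u) * v - 1 == 0).
  by apply: (@eq_frac _ _ _ (1 - u)) => //; field.
have e5 : (v == 1 - u^-1) = (u * v - u + 1 == 0).
  by apply: (@eq_frac _ _ _ u) => //; field.
have e6 : (v == 1 - (1 - u)^-1) = ((1 - u) * v + u == 0).
  by apply: (@eq_frac _ _ _ (1 - u)) => //; field.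
by rewrite subr_eq0 e2 e3 e4 e5 e6.
Qed.

(* The stabiliser of u: the fixed points of s, t and sts are 1/2, -1 and 2,
   those of the two 3-cycles are the roots of u^2 - u + 1. *)
Lemma lorbit_stab u : 2%:R != 0 :> F -> nondeg u ->
  count_mem u (lorbit u) =
    (1 + (u == 2%:R^-1)%R + (u == -1)%R + (u == 2%:R)%R
     + 2 * (u ^+ 2 - u + 1 == 0)%R)%N.
Proof.
move=> two0 /andP[u0 u1]; have u1' := subr1_neq0 u1.
have fix_sub : (1 - u == u) = (u == 2%:R^-1).
  rewrite [RHS](@eq_frac _ _ (1 - 2%:R * u) (- 2%:R)) ?oppr_eq0 //.
    by rewrite -subr_eq0 (_ : 1 - u - u = 1 - 2%:R * u) //; ring.
  by field; rewrite oppr_eq0 two0.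
have fix_inv : (u^-1 == u) = (u == -1).
  rewrite [LHS](@eq_frac _ _ ((1 - u) * (1 + u)) u) //; last by field.
  by rewrite mulf_eq0 (negbTE u1') addrC addr_eq0.
have fix_subinv : ((1 - u)^-1 == u) = (u ^+ 2 - u + 1 == 0).
  by apply: (@eq_frac _ _ _ (1 - u)) => //; field.
have fix_invsub : (1 - u^-1 == u) = (u ^+ 2 - u + 1 == 0).
  by apply: (@eq_frac _ _ _ (- u)); rewrite ?oppr_eq0 //; field; rewrite oppr_eq0 u0.
have fix_subinvsub : (1 - (1 - u)^-1 == u) = (u == 2%:R).
  rewrite [LHS](@eq_frac _ _ (u * (u - 2%:R)) (1 - u)) //; last by field.
  by rewrite mulf_eq0 (negbTE u0) subr_eq0.
rewrite /= eqxx fix_sub fix_inv fix_subinv fix_invsub fix_subinvsub; lia.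
Qed.

End AnharmonicOrbit.

Lemma two_neq0 {F : fieldType} {p : nat} :
  (p \in [pchar F])%R -> (3 <= p)%N -> 2%:R != 0 :> F.
Proof.
move=> charFp p_ge3; rewrite -(dvdn_pcharf charFp).
by apply/negP => /(dvdn_leq (isT : (0 < 2)%N)); lia.
Qed.

Section FiniteField.
Variable F : finFieldType.
Hypothesis two0 : 2%:R != 0 :> F.

Definition legendre_params : {set F} := [set u | nondeg u].

Lemma JL_image : JL F = #|jLegendre (F := F) @: legendre_params|.
Proof. by []. Qed.

Lemma card_legendre_params : (#|legendre_params| + 2 = #|F|)%N.
Proof.
have -> : legendre_params = ~: [set 0; 1] by apply/setP => x; rewrite !inE negb_or.
by rewrite -(cardsC [set (0 : F); 1]) cards2 eq_sym oner_eq0 addnC.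
Qed.

Lemma jLegendre_fibre (u : F) : u \in legendre_params ->
  #|[set v in legendre_params | jLegendre v == jLegendre u]| = #|lorbit u|.
Proof.
rewrite inE => hu; apply: eq_card => v; rewrite !in_set.
case hv: (nondeg v); first by rewrite jLegendre_eq.
by apply/esym/negbTE/negP => /(lorbit_nondeg hu); rewrite hv.
Qed.

Lemma orbit_stabiliser (u : F) : nondeg u -> (#|lorbit u| * count_mem u (lorbit u) = 6)%N.
Proof. by move=> hu; rewrite (card_count_const (lorbit_count_const hu)). Qed.

(* Burnside-type count: summing stabiliser sizes counts the fixed points of
   each of the six maps, (q - 2) + 1 + 1 + 1 + r + r. *)
Lemma sum_stabilisers :
  (\sum_(u in legendre_params) count_mem u (lorbit u) =
    #|legendre_params| + 3 + 2 * #|[set u : F | (u ^+ 2 - u + 1 == 0)%R]|)%N.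
Proof.
have nondeg2 : nondeg (2%:R : F).
  by rewrite /nondeg two0 -subr_eq0 (_ : 2%:R - 1 = 1) ?oner_eq0 //; ring.
have nondegN1 : nondeg (-1 : F).
  by rewrite /nondeg oppr_eq0 oner_eq0 -subr_eq0 (_ : -1 - 1 = - 2%:R) ?oppr_eq0 //; ring.
have point a : nondeg a -> (\sum_(u in legendre_params) (u == a) = 1)%N.
  move=> ha; rewrite sum_indicator; apply: (@eq_card1 _ a) => x; rewrite !inE andbC.
  by case: eqP => [->|].
have roots : (\sum_(u in legendre_params) (u ^+ 2 - u + 1 == 0)%R =
              #|[set u : F | (u ^+ 2 - u + 1 == 0)%R]|)%N.
  rewrite sum_indicator; apply: eq_card => x; rewrite !inE.
  case: (boolP (_ == 0)) => [root_x | _]; last by rewrite andbF.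
  have [q0 q1] : (0 : F) ^+ 2 - 0 + 1 = 1 /\ (1 : F) ^+ 2 - 1 + 1 = 1 by split; ring.
  by rewrite andbT /nondeg; apply/andP; split; apply: contraTneq root_x => ->;
    rewrite ?q0 ?q1 oner_eq0.
under eq_bigr => u /[!inE] hu do rewrite (lorbit_stab u two0 hu).
rewrite !big_split /= sum1_card big1_eq roots !point //; first ring.
exact: nondeg_inv nondeg2.
Qed.

Lemma card_sixth_roots : (#|[set u : F | (u ^+ 2 - u + 1 == 0)%R]| <= 2)%N.
Proof.
rewrite (eq_card (B := [set u : F | (u ^+ 2 + (-1) * u + 1 == 0)%R])).
  exact: card_quadratic_roots.
by move=> u; rewrite !inE mulN1r.
Qed.
End FiniteField.

Theorem mainTheorem4 (F : finFieldType) (p : nat) :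
  prime p -> (3 <= p)%N -> (p \in [pchar F])%R ->
  JL F = ((#|F| + 5) %/ 6)%N.
Proof.
move=> _ p_ge3 charFp; have two0 := two_neq0 charFp p_ge3.
have weights : (#|jLegendre (F := F) @: legendre_params F| * 6 =
                \sum_(u in legendre_params F) count_mem u (lorbit u))%N.
  apply: card_imset_weights => u hu; rewrite jLegendre_fibre //.
  by apply: orbit_stabiliser; rewrite -inE.
rewrite sum_stabilisers // in weights.
have := card_sixth_roots F; have := card_legendre_params F.
rewrite JL_image; lia.
Qed.
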